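(* Let $\mathcal{C}$ be a category and $A$ an object of $\mathcal{C}$ with $D(A)<\infty$. Then $D(A)=SD(A)$.
   Context: In a category $\mathcal{C}$, $X\leqslant^d Y$ means there are morphisms $f:X\to Y$, $g:Y\to X$ with $g\circ f=\mathrm{id}_X$. $X<^s Y$ means $X\leqslant^d Y$ holds but $Y\leqslant^d X$ fails; $X<^p Y$ means $X\leqslant^d Y$ and $X\not\cong Y$. A chain (resp. $s$-chain) of length $k$ for $A$ is $X_k<^p\cdots<^p X_1\leqslant^d A$ (resp. $X_k<^s\cdots<^s X_1\leqslant^d A$); the depth $D(A)$ (resp. strong depth $SD(A)$) is the supremum of their lengths. *)

From Stdlib Require Import Arith.

Record Category := {
  Obj : Type;
  Hom : Obj -> Obj -> Type;
  comp : forall X Y Z : Obj, Hom Y Z -> Hom X Y -> Hom X Z;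
  id : forall X : Obj, Hom X X;
  comp_assoc : forall (W X Y Z : Obj) (h : Hom Y Z) (g : Hom X Y) (f : Hom W X),
      comp W Y Z h (comp W X Y g f) = comp W X Z (comp X Y Z h g) f;
  comp_id_l : forall (X Y : Obj) (f : Hom X Y), comp X Y Y (id Y) f = f;
  comp_id_r : forall (X Y : Obj) (f : Hom X Y), comp X X Y f (id X) = f
}.

Arguments comp {c X Y Z} _ _.
Arguments id {c} X.

Section Depth.
Variable C : Category.

Definition retract_le (X Y : Obj C) : Prop :=
  exists (f : Hom C X Y) (g : Hom C Y X), comp g f = id X.

Definition isomorphic (X Y : Obj C) : Prop :=
  exists (f : Hom C X Y) (g : Hom C Y X), comp g f = id X /\ comp f g = id Y.

Definition lt_s (X Y : Obj C) : Prop := retract_le X Y /\ ~ retract_le Y X.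

Definition lt_p (X Y : Obj C) : Prop := retract_le X Y /\ ~ isomorphic X Y.

(* A chain of length k for A w.r.t. a strict relation lt:
   X_{k-1} lt ... lt X_0 <=^d A  (0-indexed; k = 0 is the empty chain). *)
Definition has_chain_rel (lt : Obj C -> Obj C -> Prop) (A : Obj C) (k : nat) : Prop :=
  exists X : nat -> Obj C,
    (0 < k -> retract_le (X 0) A) /\
    (forall i, S i < k -> lt (X (S i)) (X i)).

Definition has_chain := has_chain_rel lt_p.
Definition has_s_chain := has_chain_rel lt_s.

(* Supremum of a set of naturals in nat ∪ {∞} (None = ∞). *)
Definition is_sup_nat (P : nat -> Prop) (d : option nat) : Prop :=
  match d with
  | Some n => P n /\ (forall k, P k -> k <= n)
  | None => forall n, exists k, P k /\ n < k
  end.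

Definition depth_is (A : Obj C) (d : option nat) : Prop := is_sup_nat (has_chain A) d.
Definition strong_depth_is (A : Obj C) (d : option nat) : Prop :=
  is_sup_nat (has_s_chain A) d.

End Depth.

(* A p-chain all of whose steps are strict is an s-chain.  A step
   X_(i+1) <^p X_i with X_i <=^d X_(i+1) is also a step X_i <^p X_(i+1), so the
   chain can be continued by bouncing between X_i and X_(i+1) forever; this is
   impossible when D(A) is finite. *)
From Stdlib Require Import Arith Lia.

Lemma is_sup_nat_ext (P Q : nat -> Prop) (d : option nat) :
  (forall k, P k <-> Q k) -> is_sup_nat P d -> is_sup_nat Q d.
Proof.
  intros PQ; destruct d as [n|]; simpl.
  - intros [Pn Pmax]; split; [apply PQ, Pn|].
    intros k Qk; apply Pmax, PQ, Qk.
  - intros Punb m; destruct (Punb m) as [k [Pk lt_mk]].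
    exists k; split; [apply PQ, Pk | exact lt_mk].
Qed.

(* Indices of the continued chain: [0, ..., i, i+1, i, i+1, ...]. *)
Definition zigzag (i j : nat) : nat :=
  if j <=? i then j else if Nat.even (j - i) then i else S i.

Lemma zigzagS (i j : nat) :
  (zigzag i (S j) = S (zigzag i j) /\ zigzag i j <= i)
  \/ (zigzag i (S j) = i /\ zigzag i j = S i).
Proof.
  unfold zigzag.
  destruct (Nat.leb_spec (S j) i); [rewrite (proj2 (Nat.leb_le j i)) by lia; left; lia|].
  destruct (Nat.leb_spec j i).
  - left; replace j with i by lia; rewrite Nat.sub_succ_l, Nat.sub_diag by lia; simpl; lia.
  - rewrite Nat.sub_succ_l, Nat.even_succ, <- Nat.negb_even by lia.
    destruct (Nat.even (j - i)); simpl; [left | right]; lia.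
Qed.

Section Chains.
Variable C : Category.

Lemma isomorphic_sym (X Y : Obj C) : isomorphic C X Y -> isomorphic C Y X.
Proof. intros [f [g [gf fg]]]; exists g, f; split; assumption. Qed.

Lemma lt_s_lt_p (X Y : Obj C) : lt_s C X Y -> lt_p C X Y.
Proof.
  intros [XY not_YX]; split; [exact XY|].
  intros [f [g [_ fg]]]; apply not_YX; exists g, f; exact fg.
Qed.

Lemma lt_p_retract_back (X Y : Obj C) :
  lt_p C X Y -> retract_le C Y X -> lt_p C Y X.
Proof.
  intros [_ not_iso] YX; split; [exact YX|].
  intros iso; apply not_iso, isomorphic_sym, iso.
Qed.

Lemma has_chain_rel_mono (lt lt' : Obj C -> Obj C -> Prop) (A : Obj C) (k : nat) :
  (forall X Y, lt X Y -> lt' X Y) ->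
  has_chain_rel C lt A k -> has_chain_rel C lt' A k.
Proof.
  intros lt_lt' [X [X0A steps]]; exists X; split; [exact X0A|].
  intros i Hi; apply lt_lt', steps, Hi.
Qed.

Lemma has_chain_rel_zigzag (lt : Obj C -> Obj C -> Prop) (A : Obj C)
    (k i : nat) (X : nat -> Obj C) :
  S i < k -> retract_le C (X 0) A ->
  (forall j, S j < k -> lt (X (S j)) (X j)) ->
  lt (X i) (X (S i)) ->
  forall m, has_chain_rel C lt A m.
Proof.
  intros ik X0A steps back m; exists (fun j => X (zigzag i j)); split.
  - intros _; exact X0A.
  - intros j _; destruct (zigzagS i j) as [[-> le_i] | [-> ->]].
    + apply steps; lia.
    + exact back.
Qed.

Lemma has_chain_has_s_chain (A : Obj C) (n : nat) :
  depth_is C A (Some n) -> forall k, has_chain C A k -> has_s_chain C A k.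
Proof.
  intros [_ depth_max] k [X [X0A steps]]; exists X; split; [exact X0A|].
  intros i ik; destruct (steps i ik) as [step not_iso]; split; [exact step|].
  intros back.
  assert (long : has_chain C A (S n)).
  { apply (has_chain_rel_zigzag _ A k i X ik); [apply X0A; lia | exact steps |].
    apply lt_p_retract_back; [split|]; assumption. }
  specialize (depth_max _ long); lia.
Qed.

End Chains.

Theorem corollary2p16 (C : Category) (A : Obj C) :
  (exists n : nat, depth_is C A (Some n)) ->
  forall d : option nat, depth_is C A d <-> strong_depth_is C A d.
Proof.
  intros [n depth_n] d.
  assert (same_chains : forall k, has_chain C A k <-> has_s_chain C A k).
  { intros k; split.
    - apply (has_chain_has_s_chain C A n depth_n).
    - apply has_chain_rel_mono, lt_s_lt_p. }
  split; apply is_sup_nat_ext; intros k; [|symmetry]; apply same_chains.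
Qed.
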